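(* Let $\lambda\subseteq T^*\mathbb{C}^d$ be a positive Lagrangian, let $\lambda_1=\{x\in\mathbb{C}^d:\exists\xi\in\mathbb{C}^d,\ (x,\xi)\in\lambda\}$, $k=\dim_{\mathbb{C}}\lambda_1$ and $N=d-k$. Then there exists a quadratic form $\rho$ on $\mathbb{R}^d$ (with complex coefficients, extended bilinearly to $\mathbb{C}^d$) with ${\rm Im}\,\rho\ge 0$ on $\mathbb{R}^d$, such that: if $k=d$ then $$\lambda=\{(x,\rho'(x)):\ x\in\mathbb{C}^d\},$$ while if $0\le k\le d-1$ there exists an injective real matrix $L\in\mathbb{R}^{d\times N}$ such that ${\rm Re}(\operatorname{Ran}\rho')$ and ${\rm Im}(\operatorname{Ran}\rho')$ are contained in $(\operatorname{Ran}L)^\perp\subseteq\mathbb{R}^d$ (where $\operatorname{Ran}\rho'=\{\rho'(x):x\in\mathbb{C}^d\}$ and $\operatorname{Ran}L=L\mathbb{R}^N$), and $$\lambda=\{(x,\rho'(x)+L\theta):\ (x,\theta)\in\mathbb{C}^{d+N},\ L^tx=0\}.$$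
   Context: $T^*\mathbb{C}^d\simeq\mathbb{C}^{2d}$ carries the canonical symplectic form $\sigma((x,\xi),(x',\xi'))=\langle x',\xi\rangle-\langle x,\xi'\rangle$, with $\langle\cdot,\cdot\rangle$ the bilinear form $\langle z,w\rangle=\sum z_jw_j$. A Lagrangian is a complex linear subspace $\lambda$ with $\lambda=\{X:\sigma(X,Y)=0\ \forall Y\in\lambda\}$; it is positive if $i\sigma(\overline X,X)\ge0$ for all $X\in\lambda$. $\rho'$ denotes the gradient of $\rho$. *)

(* The complex field C^d is modelled by an arbitrary
   numClosedFieldType C (e.g. the complex numbers); "real" means Num.real. *)
From HB Require Import structures.
From mathcomp Require Import all_boot all_order all_algebra.
Set Implicit Arguments. Unset Strict Implicit. Unset Printing Implicit Defensive.
Import Order.TTheory GRing.Theory Num.Theory.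
Local Open Scope ring_scope.

Definition bdot (C : numClosedFieldType) (n : nat) (z w : 'rV[C]_n) : C :=
  (z *m w^T) 0 0.

(* points of T^*C^d are row vectors (x, xi) : 'rV_(d+d) ;
   sigma((x,xi),(x',xi')) = <x',xi> - <x,xi'> *)
Definition sigma (C : numClosedFieldType) (d : nat) (X Y : 'rV[C]_(d + d)) : C :=
  bdot (lsubmx Y) (rsubmx X) - bdot (lsubmx X) (rsubmx Y).

(* A subspace of T^*C^d is the row space of a square matrix A. *)
Definition lagrangian (C : numClosedFieldType) (d : nat) (A : 'M[C]_(d + d)) : Prop :=
  forall Y : 'rV[C]_(d + d),
    (Y <= A)%MS <-> (forall X : 'rV[C]_(d + d), (X <= A)%MS -> sigma X Y = 0).

Definition conjv (C : numClosedFieldType) (m n : nat) (M : 'M[C]_(m, n)) :=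
  map_mx (@Num.conj C) M.

Definition positive_lagrangian (C : numClosedFieldType) (d : nat) (A : 'M[C]_(d + d)) : Prop :=
  lagrangian A /\
  forall X : 'rV[C]_(d + d), (X <= A)%MS -> 0 <= 'i * sigma (conjv X) X.

(* lambda_1 = projection of lambda onto the x-component: row space of the
   first d columns of A; its dimension k. *)
Definition lambda1 (C : numClosedFieldType) (d : nat) (A : 'M[C]_(d + d)) : 'M[C]_(d + d, d) :=
  lsubmx A.

Definition qform (C : numClosedFieldType) (d : nat) (Q : 'M[C]_d) (x : 'rV[C]_d) : C :=
  (x *m Q *m x^T) 0 0.

Definition qgrad (C : numClosedFieldType) (d : nat) (Q : 'M[C]_d) (x : 'rV[C]_d) : 'rV[C]_d :=
  x *m (Q + Q^T).

Definition is_real_mx (C : numClosedFieldType) (m n : nat) (M : 'M[C]_(m, n)) : Prop :=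
  forall i j, M i j \is Num.real.

From HB Require Import structures.
From mathcomp Require Import all_boot all_order all_algebra.
From mathcomp Require Import ring.
Set Implicit Arguments. Unset Strict Implicit. Unset Printing Implicit Defensive.
Import Order.TTheory GRing.Theory Num.Theory.
Local Open Scope ring_scope.

(* Let W = lambda_1 and let K = {xi : (0, xi) in lambda} be the fibre.  Since
   lambda is Lagrangian, K is the annihilator of W for <.,.>.  Positivity,
   tested on (0, xi) + t Y, forces K to be stable under complex
   conjugation, hence so is W, and then W /\ K = 0 because <v, conj v> = 0
   only for v = 0.  So C^d = W (+) K, and with P the projection onto W along K
   every point of lambda is (x, x S + f) with x in W, f in K, where
   S = P A_1^+ A_2 P is symmetric because lambda is isotropic.  Then
   rho(x) = x S x^T / 2 has Im rho >= 0 on real points by positivity (P maps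
   real vectors to real vectors), and L is obtained from a real basis of K,
   extracted from the real and imaginary parts of any basis. *)

Lemma kermx_trK (F : fieldType) m n (M : 'M[F]_(m, n)) :
  (kermx (kermx M^T)^T == M)%MS.
Proof.
have MK : (M <= kermx (kermx M^T)^T)%MS.
  by rewrite sub_kermx -[M in M *m _]trmxK -trmx_mul mulmx_ker trmx0.
rewrite andbC MK /= -(mxrank_leqif_sup MK).
by rewrite mxrank_ker !mxrank_tr mxrank_ker mxrank_tr subKn // rank_leq_col.
Qed.

Lemma mulmx_tr_eq0S (F : fieldType) m1 m2 n (M : 'M[F]_(m1, n)) (N : 'M[F]_(m2, n))
    (x : 'rV[F]_n) :
  (M <= N)%MS -> x *m N^T = 0 -> x *m M^T = 0.
Proof. by case/submxP=> D -> xN0; rewrite trmx_mul mulmxA xN0 mul0mx. Qed.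

Local Notation re_mx := (map_mx (fun z => 'Re z)).
Local Notation im_mx := (map_mx (fun z => 'Im z)).

Section BilinearForm.
Variable C : numClosedFieldType.

Lemma bdotC n (z w : 'rV[C]_n) : bdot z w = bdot w z.
Proof. by rewrite /bdot -[z *m w^T]trmxK trmx_mul trmxK mxE. Qed.

Lemma bdotDl n (z1 z2 w : 'rV[C]_n) : bdot (z1 + z2) w = bdot z1 w + bdot z2 w.
Proof. by rewrite /bdot mulmxDl mxE. Qed.

Lemma bdotDr n (z w1 w2 : 'rV[C]_n) : bdot z (w1 + w2) = bdot z w1 + bdot z w2.
Proof. by rewrite bdotC bdotDl !(bdotC _ z). Qed.

Lemma bdotNl n (z w : 'rV[C]_n) : bdot (- z) w = - bdot z w.
Proof. by rewrite /bdot mulNmx mxE. Qed.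

Lemma bdotZl n a (z w : 'rV[C]_n) : bdot (a *: z) w = a * bdot z w.
Proof. by rewrite /bdot -scalemxAl mxE. Qed.

Lemma bdotZr n a (z w : 'rV[C]_n) : bdot z (a *: w) = a * bdot z w.
Proof. by rewrite bdotC bdotZl bdotC. Qed.

Lemma bdot0l n (w : 'rV[C]_n) : bdot (0 : 'rV[C]_n) w = 0.
Proof. by rewrite /bdot mul0mx mxE. Qed.

Lemma bdot_mull m n (u : 'rV[C]_m) (M : 'M[C]_(m, n)) (w : 'rV[C]_n) :
  bdot (u *m M) w = bdot u (w *m M^T).
Proof. by rewrite /bdot trmx_mul trmxK mulmxA. Qed.

Lemma bdot_delta n (j : 'I_n) (w : 'rV[C]_n) : bdot (delta_mx 0 j) w = w 0 j.
Proof. by rewrite /bdot -rowE !mxE. Qed.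

Lemma conjv_bdot n (z w : 'rV[C]_n) : bdot (conjv z) (conjv w) = (bdot z w)^*.
Proof. by rewrite /bdot /conjv map_trmx -map_mxM mxE. Qed.

Lemma bdot_conjv_eq0 n (w : 'rV[C]_n) : bdot w (conjv w) = 0 -> w = 0.
Proof.
rewrite /bdot mxE; under eq_bigr do rewrite !mxE.
move=> /psumr_eq0P w0; apply/matrixP => i j; rewrite (ord1 i) mxE.
by apply/eqP; rewrite -mul_conjC_eq0; apply/eqP/w0 => // k _; apply: mul_conjC_ge0.
Qed.

Lemma sub_kermx_trP m n (M : 'M[C]_(m, n)) (w : 'rV[C]_n) :
  reflect (forall u : 'rV_m, bdot (u *m M) w = 0) (w <= kermx M^T)%MS.
Proof.
apply: (iffP sub_kermxP) => [wM0 u | wM0]; first by rewrite bdot_mull wM0 bdotC bdot0l.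
apply/matrixP => i j; have := wM0 (delta_mx 0 j).
by rewrite bdot_mull bdot_delta (ord1 i) => ->; rewrite mxE.
Qed.

Lemma sigma_row_mx d (x1 e1 x2 e2 : 'rV[C]_d) :
  sigma (row_mx x1 e1) (row_mx x2 e2) = bdot x2 e1 - bdot x1 e2.
Proof. by rewrite /sigma !row_mxKl !row_mxKr. Qed.

Lemma conjvK m n (M : 'M[C]_(m, n)) : conjv (conjv M) = M.
Proof. by apply/matrixP => i j; rewrite !mxE conjCK. Qed.

Lemma conjvD m n (M N : 'M[C]_(m, n)) : conjv (M + N) = conjv M + conjv N.
Proof. exact: map_mxD. Qed.

Lemma conjvB m n (M N : 'M[C]_(m, n)) : conjv (M - N) = conjv M - conjv N.
Proof. exact: map_mxB. Qed.

Lemma conjvZ m n a (M : 'M[C]_(m, n)) : conjv (a *: M) = a^* *: conjv M.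
Proof. exact: map_mxZ. Qed.

Lemma conjv_row_mx m n1 n2 (M : 'M[C]_(m, n1)) (N : 'M[C]_(m, n2)) :
  conjv (row_mx M N) = row_mx (conjv M) (conjv N).
Proof. exact: map_row_mx. Qed.

Lemma conjv_id m n (M : 'M[C]_(m, n)) : is_real_mx M -> conjv M = M.
Proof. by move=> Mreal; apply/matrixP => i j; rewrite mxE conj_Creal. Qed.

(* [t := 'i * b^* / (1 + h)] makes the expression negative unless [b = 0]. *)
Lemma cross_term_eq0 (b h : C) :
  0 <= h -> (forall t, 0 <= 'i * (t * b - (t * b)^*) + t * t^* * h) -> b = 0.
Proof.
move=> h_ge0 pos; have [//|b0] := eqVneq b 0; exfalso.
set s := (1 + h)^-1.
have s_gt0 : 0 < s by rewrite invr_gt0 ltr_wpDr.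
have sh_lt2 : s * h < 2%:R.
  apply: (@le_lt_trans _ _ 1); last by rewrite ltr1n.
  by rewrite /s mulrC ler_pdivrMr ?ltr_wpDr // mul1r lerDr.
have bb_gt0 : 0 < b * b^* by rewrite mul_conjC_gt0.
have := pos ('i * b^* * s).
have -> : 'i * ('i * b^* * s * b - ('i * b^* * s * b)^*)
          + 'i * b^* * s * ('i * b^* * s)^* * h = s * (b * b^*) * (s * h - 2%:R).
  have sr : s^* = s by apply/conj_Creal/gtr0_real.
  have ii : 'i * 'i = -1 :> C by rewrite -expr2 sqrCi.
  rewrite !rmorphM /= conjCi conjCK sr; ring: ii.
by rewrite (pmulr_rge0 _ (mulr_gt0 s_gt0 bb_gt0)) subr_ge0 => /(lt_le_trans sh_lt2); rewrite ltxx.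
Qed.

Lemma re_mxE m n (M : 'M[C]_(m, n)) : re_mx M = 2%:R^-1 *: (M + conjv M).
Proof. by apply/matrixP => i j; rewrite !mxE ReE mulrC. Qed.

Lemma im_mxE m n (M : 'M[C]_(m, n)) : im_mx M = ('i / 2%:R) *: (conjv M - M).
Proof. by apply/matrixP => i j; rewrite !mxE ImE; ring. Qed.

Lemma bdot_re_im_eq0 n (y v : 'rV[C]_n) :
  conjv v = v -> bdot y v = 0 -> bdot (re_mx y) v = 0 /\ bdot (im_mx y) v = 0.
Proof.
move=> vreal yv0.
have cyv0 : bdot (conjv y) v = 0 by rewrite -vreal conjv_bdot yv0 conjC0.
by rewrite re_mxE im_mxE !bdotZl !bdotDl bdotNl yv0 cyv0 oppr0 !addr0 !mulr0.
Qed.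

Lemma re_im_col_mx_eqmx m n (M : 'M[C]_(m, n)) :
  (conjv M <= M)%MS -> (col_mx (re_mx M) (im_mx M) == M)%MS.
Proof.
move=> sMM; apply/andP; split.
  by rewrite col_mx_sub re_mxE im_mxE !scalemx_sub // ?addmx_sub ?eqmx_opp.
have M_re_im : M = re_mx M + 'i *: im_mx M.
  by apply/matrixP => i j; rewrite !mxE -Crect.
rewrite [X in (X <= _)%MS]M_re_im addmx_sub ?scalemx_sub //; apply/submxP.
  by exists (row_mx 1%:M 0); rewrite mul_row_col mul1mx mul0mx addr0.
by exists (row_mx 0 1%:M); rewrite mul_row_col mul1mx mul0mx add0r.
Qed.

Lemma real_row_basis m n r (M : 'M[C]_(m, n)) :
  (conjv M <= M)%MS -> \rank M = r ->
  exists B : 'M[C]_(r, n), [/\ is_real_mx B, row_free B & (B == M)%MS].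
Proof.
move=> sMM rkM; set G := col_mx (re_mx M) (im_mx M).
have GM : (G == M)%MS := re_im_col_mx_eqmx sMM.
have rkG : \rank G = r by rewrite (eqmx_rank GM).
exists (castmx (rkG, erefl n) (rowsub (maxrankfun G) G)); split.
- move=> i j; rewrite castmxE !mxE; case: split => k; rewrite mxE.
    exact: Creal_Re.
  exact: Creal_Im.
- by rewrite row_free_castmx maxrowsub_free.
- apply/eqmxP; apply: eqmx_trans (eqmx_cast _ _) _.
  by apply: eqmx_trans (eq_maxrowsub _) _; apply/eqmxP.
Qed.

Lemma qgrad_half_sym d (S : 'M[C]_d) (x : 'rV[C]_d) :
  S^T = S -> qgrad (2%:R^-1 *: S) x = x *m S.
Proof.
have half2 : 2%:R^-1 + 2%:R^-1 = 1 :> C by field.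
by move=> Ssym; rewrite /qgrad linearZ /= Ssym -scalerDl half2 scale1r.
Qed.

End BilinearForm.

Section Lagrangian.
Variables (C : numClosedFieldType) (d : nat) (A : 'M[C]_(d + d)).
Hypothesis lagA : lagrangian A.

Definition fibre : 'M[C]_d := kermx (lambda1 A)^T.

Lemma lagrangian_sigma0 (X Y : 'rV[C]_(d + d)) :
  (X <= A)%MS -> (Y <= A)%MS -> sigma X Y = 0.
Proof. by move=> XA YA; apply: (proj1 (lagA Y)) YA X XA. Qed.

Lemma fibre_bdotP (xi : 'rV[C]_d) :
  reflect (forall Y, (Y <= A)%MS -> bdot (lsubmx Y) xi = 0) (xi <= fibre)%MS.
Proof.
apply: (iffP (sub_kermx_trP _ _)) => [xi0 _ /submxP[u ->] | xi0 u].
  by rewrite -mulmx_lsub xi0.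
by rewrite /lambda1 mulmx_lsub xi0 ?submxMl.
Qed.

Lemma fibreP (xi : 'rV[C]_d) : (row_mx 0 xi <= A)%MS <-> (xi <= fibre)%MS.
Proof.
have sigma0 Y : sigma Y (row_mx 0 xi) = - bdot (lsubmx Y) xi.
  by rewrite -[Y]hsubmxK sigma_row_mx bdot0l sub0r row_mxKl.
split=> [xiA | /fibre_bdotP xi0].
  by apply/fibre_bdotP => Y YA; apply/eqP; rewrite -oppr_eq0 -sigma0 lagrangian_sigma0.
by apply/(proj2 (lagA _)) => Y YA; rewrite sigma0 xi0 ?oppr0.
Qed.

Lemma rank_fibre : \rank fibre = (d - \rank (lambda1 A))%N.
Proof. by rewrite mxrank_ker mxrank_tr. Qed.

Lemma sub_lambda1_fibre (w : 'rV[C]_d) : (w <= lambda1 A)%MS = (w *m fibre^T == 0).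
Proof. by rewrite -sub_kermx (eqmxP (kermx_trK (lambda1 A))). Qed.

Lemma bdot_lambda1_fibre (w f : 'rV[C]_d) :
  (w <= lambda1 A)%MS -> (f <= fibre)%MS -> bdot w f = 0.
Proof. by case/submxP=> u -> /sub_kermx_trP; apply. Qed.

Section Positive.
Hypothesis posA : forall X : 'rV[C]_(d + d), (X <= A)%MS -> 0 <= 'i * sigma (conjv X) X.

Lemma fibre_conjv (xi : 'rV[C]_d) : (xi <= fibre)%MS -> (conjv xi <= fibre)%MS.
Proof.
move=> xiK; apply/fibre_bdotP => Y YA.
set x := lsubmx Y; set eta := rsubmx Y.
have XtA t : (row_mx (t *: x) (xi + t *: eta) <= A)%MS.
  have -> : row_mx (t *: x) (xi + t *: eta) = row_mx 0 xi + t *: Y.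
    by rewrite -[in RHS](hsubmxK Y) scale_row_mx add_row_mx add0r.
  by rewrite addmx_sub ?scalemx_sub // (proj2 (fibreP xi)).
apply: (@cross_term_eq0 _ _ ('i * (bdot x (conjv eta) - bdot (conjv x) eta))).
  by have := posA YA; rewrite -(hsubmxK Y) conjv_row_mx sigma_row_mx.
move=> t; have := posA (XtA t).
rewrite conjv_row_mx conjvD !conjvZ sigma_row_mx !bdotZl !bdotDr !bdotZr.
rewrite -[xi in bdot (conjv x) xi]conjvK conjv_bdot rmorphM /=.
set b := bdot x (conjv xi); set c1 := bdot x (conjv eta); set c2 := bdot (conjv x) eta.
suff -> : 'i * (t * b - t^* * b^*) + t * t^* * ('i * (c1 - c2))
          = 'i * (t * (b + t^* * c1) - t^* * (b^* + t * c2)) by [].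
ring.
Qed.

Lemma conjv_fibre_sub : (conjv fibre <= fibre)%MS.
Proof.
apply/row_subP => i; rewrite /conjv -map_row.
exact/fibre_conjv/row_sub.
Qed.

Lemma lambda1_conjv (w : 'rV[C]_d) :
  (w <= lambda1 A)%MS -> (conjv w <= lambda1 A)%MS.
Proof.
rewrite !sub_lambda1_fibre => /eqP wK0; apply/eqP.
have Ksub : (fibre <= conjv fibre)%MS.
  by rewrite -[fibre in (fibre <= _)%MS]conjvK map_submx conjv_fibre_sub.
apply: mulmx_tr_eq0S Ksub _.
have -> : conjv w *m (conjv fibre)^T = conjv (w *m fibre^T).
  by rewrite /conjv map_trmx -map_mxM.
by rewrite wK0 /conjv map_mx0.
Qed.

Lemma lambda1_fibre_eq0 (v : 'rV[C]_d) :
  (v <= lambda1 A)%MS -> (v <= fibre)%MS -> v = 0.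
Proof. by move=> vW vK; apply/bdot_conjv_eq0/bdot_lambda1_fibre/fibre_conjv. Qed.

Lemma capmx_lambda1_fibre : (<<lambda1 A>> :&: fibre = 0)%MS.
Proof.
apply/eqP/rowV0P => v; rewrite sub_capmx genmxE => /andP[vW vK].
exact: lambda1_fibre_eq0.
Qed.

Lemma lambda1_fibre_full : row_full (<<lambda1 A>> + fibre)%MS.
Proof.
apply/eqP; have := mxrank_sum_cap <<lambda1 A>>%MS fibre.
by rewrite capmx_lambda1_fibre mxrank0 addn0 genmxE rank_fibre subnKC // rank_leq_col.
Qed.

Definition proj_lambda1 : 'M[C]_d := proj_mx <<lambda1 A>>%MS fibre.

Definition grad_mx : 'M[C]_d :=
  proj_lambda1 *m pinvmx (lambda1 A) *m rsubmx A *m proj_lambda1.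

Definition rho_mx : 'M[C]_d := 2%:R^-1 *: grad_mx.

Lemma proj_lambda1_sub (x : 'rV[C]_d) : (x *m proj_lambda1 <= lambda1 A)%MS.
Proof. by rewrite (submx_trans (proj_mx_sub _ _ _)) ?genmxE. Qed.

Lemma proj_lambda1_compl (x : 'rV[C]_d) : (x - x *m proj_lambda1 <= fibre)%MS.
Proof. exact/proj_mx_compl_sub/submx_full/lambda1_fibre_full. Qed.

Lemma proj_lambda1_id (x : 'rV[C]_d) :
  (x <= lambda1 A)%MS -> x *m proj_lambda1 = x.
Proof. by move=> xW; apply: proj_mx_id; rewrite ?capmx_lambda1_fibre ?genmxE. Qed.

Lemma grad_mx_sub (x : 'rV[C]_d) : (x *m grad_mx <= lambda1 A)%MS.
Proof. by rewrite /grad_mx mulmxA proj_lambda1_sub. Qed.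

Lemma row_mx_pinv_sub (w : 'rV[C]_d) :
  (w <= lambda1 A)%MS -> (row_mx w (w *m pinvmx (lambda1 A) *m rsubmx A) <= A)%MS.
Proof.
move=> wW; rewrite -[w in row_mx w _](mulmxKpV wW) /lambda1 -mul_mx_row hsubmxK.
exact: submxMl.
Qed.

Lemma row_mx_proj_grad_sub (x : 'rV[C]_d) :
  (row_mx (x *m proj_lambda1) (x *m grad_mx) <= A)%MS.
Proof.
set w := x *m proj_lambda1; set y := w *m pinvmx (lambda1 A) *m rsubmx A.
have fibre_y : (row_mx 0 (y - y *m proj_lambda1) <= A)%MS.
  exact/fibreP/proj_lambda1_compl.
have -> : row_mx w (x *m grad_mx) = row_mx w y - row_mx 0 (y - y *m proj_lambda1).
  by rewrite opp_row_mx add_row_mx oppr0 addr0 opprB addrC subrK /y /w /grad_mx !mulmxA.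
by rewrite addmx_sub ?eqmx_opp ?row_mx_pinv_sub ?proj_lambda1_sub.
Qed.

Lemma lagrangian_paramP (Y : 'rV[C]_(d + d)) :
  (Y <= A)%MS <-> exists x f : 'rV[C]_d,
    [/\ (x <= lambda1 A)%MS, (f <= fibre)%MS & Y = row_mx x (x *m grad_mx + f)].
Proof.
split=> [YA | [x [f [xW fK ->]]]].
  have xW : (lsubmx Y <= lambda1 A)%MS.
    by case/submxP: YA => u ->; rewrite -mulmx_lsub submxMl.
  exists (lsubmx Y), (rsubmx Y - lsubmx Y *m grad_mx); split=> //.
    apply/fibreP.
    have : (Y - row_mx (lsubmx Y *m proj_lambda1) (lsubmx Y *m grad_mx) <= A)%MS.
      by rewrite addmx_sub ?eqmx_opp ?row_mx_proj_grad_sub.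
    by rewrite proj_lambda1_id // -{1}(hsubmxK Y) opp_row_mx add_row_mx subrr.
  by rewrite addrCA subrr addr0 hsubmxK.
have -> : row_mx x (x *m grad_mx + f) = row_mx (x *m proj_lambda1) (x *m grad_mx) + row_mx 0 f.
  by rewrite add_row_mx addr0 proj_lambda1_id.
by rewrite addmx_sub ?row_mx_proj_grad_sub ?(proj2 (fibreP f)).
Qed.

Lemma bdot_proj_lambda1 (y z : 'rV[C]_d) :
  (z <= lambda1 A)%MS -> bdot (y *m proj_lambda1) z = bdot y z.
Proof.
move=> zW; rewrite -[in RHS](subrK (y *m proj_lambda1) y) bdotDl.
by rewrite [bdot (y - _) z]bdotC (bdot_lambda1_fibre zW (proj_lambda1_compl y)) add0r.
Qed.

Lemma grad_mx_sym : grad_mx^T = grad_mx.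
Proof.
have grad_bdotC x y : bdot y (x *m grad_mx) = bdot x (y *m grad_mx).
  have := lagrangian_sigma0 (row_mx_proj_grad_sub x) (row_mx_proj_grad_sub y).
  rewrite sigma_row_mx !bdot_proj_lambda1 ?grad_mx_sub // => /eqP.
  by rewrite subr_eq0 => /eqP; rewrite bdotC => ->; rewrite bdotC.
apply/matrixP => i j; rewrite mxE.
by have := grad_bdotC (delta_mx 0 j) (delta_mx 0 i); rewrite !bdot_delta -!rowE !mxE.
Qed.

Lemma qgrad_rho (x : 'rV[C]_d) : qgrad rho_mx x = x *m grad_mx.
Proof. exact/qgrad_half_sym/grad_mx_sym. Qed.

Lemma proj_lambda1_real (x : 'rV[C]_d) :
  is_real_mx x -> conjv (x *m proj_lambda1) = x *m proj_lambda1.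
Proof.
move=> xreal; set w := x *m proj_lambda1; apply/eqP; rewrite eq_sym -subr_eq0; apply/eqP.
apply: lambda1_fibre_eq0.
  by rewrite addmx_sub ?eqmx_opp ?lambda1_conjv ?proj_lambda1_sub.
have -> : w - conjv w = conjv (x - w) - (x - w).
  by rewrite conjvB (conjv_id xreal) opprB [RHS]addrC addrA subrK.
by rewrite addmx_sub ?eqmx_opp ?fibre_conjv ?proj_lambda1_compl.
Qed.

Lemma Im_qform_rho_ge0 (x : 'rV[C]_d) : is_real_mx x -> 0 <= 'Im (qform rho_mx x).
Proof.
move=> xreal; set z := bdot (x *m proj_lambda1) (x *m grad_mx).
have -> : qform rho_mx x = 2%:R^-1 * z.
  rewrite /qform /rho_mx -scalemxAr -scalemxAl mxE; congr (_ * _).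
  by rewrite /z bdot_proj_lambda1 ?grad_mx_sub // bdotC.
have z_ge0 : 0 <= 'i * (z^* - z).
  have := posA (row_mx_proj_grad_sub x); rewrite conjv_row_mx sigma_row_mx proj_lambda1_real //.
  by rewrite -{1}(proj_lambda1_real xreal) conjv_bdot.
rewrite ImE rmorphM /= fmorphV rmorph_nat.
have -> : 'i * (2%:R^-1 * z^* - 2%:R^-1 * z) / 2%:R
          = ('i * (z^* - z)) * (2%:R^-1 * 2%:R^-1) :> C by ring.
by rewrite mulr_ge0 // mulr_ge0 // invr_ge0 ler0n.
Qed.

Lemma lagrangian_graphP : \rank (lambda1 A) = d -> forall Y : 'rV[C]_(d + d),
  (Y <= A)%MS <-> exists x, Y = row_mx x (qgrad rho_mx x).
Proof.
move=> rkW Y; have K0 : fibre = 0 by apply/eqP; rewrite -mxrank_eq0 rank_fibre rkW subnn.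
rewrite lagrangian_paramP K0; split=> [[x [f [_ + ->]]] | [x ->]].
  by rewrite submx0 => /eqP ->; exists x; rewrite qgrad_rho addr0.
exists x, 0; rewrite qgrad_rho addr0 sub0mx submx_full //; exact/eqP.
Qed.

Lemma lagrangian_basisP r (L : 'M[C]_(d, r)) :
  (L^T == fibre)%MS -> forall Y : 'rV[C]_(d + d),
  (Y <= A)%MS <->
  exists x th, x *m L = 0 /\ Y = row_mx x (qgrad rho_mx x + (L *m th)^T).
Proof.
move=> /andP[LK KL] Y.
have lambda1_L (x : 'rV[C]_d) : (x <= lambda1 A)%MS <-> x *m L = 0.
  rewrite sub_lambda1_fibre -[L]trmxK; split=> [/eqP | xL0]; first exact: mulmx_tr_eq0S.
  exact/eqP/(mulmx_tr_eq0S KL).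
rewrite lagrangian_paramP; split=> [[x [f [xW fK ->]]] | [x [th [xL0 ->]]]].
  exists x, (f *m pinvmx L^T)^T; split; first exact/lambda1_L.
  by rewrite qgrad_rho trmx_mul !trmxK mulmxKpV // (submx_trans fK KL).
exists x, (L *m th)^T; split; first exact/lambda1_L.
  by rewrite trmx_mul (submx_trans (submxMl _ _) LK).
by rewrite qgrad_rho.
Qed.

Lemma qgrad_rho_re_im_orth r (L : 'M[C]_(d, r)) (x : 'rV[C]_d) (th : 'cV[C]_r) :
  (L^T <= fibre)%MS -> is_real_mx L -> is_real_mx th ->
  bdot (re_mx (qgrad rho_mx x)) (L *m th)^T = 0 /\
  bdot (im_mx (qgrad rho_mx x)) (L *m th)^T = 0.
Proof.
move=> LK Lreal threal; apply: bdot_re_im_eq0.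
  apply: conjv_id => i j; rewrite !mxE; apply: rpred_sum => k _; exact: rpredM.
rewrite qgrad_rho; apply: bdot_lambda1_fibre (grad_mx_sub x) _.
by rewrite trmx_mul (submx_trans (submxMl _ _) LK).
Qed.

End Positive.
End Lagrangian.

Unset Implicit Arguments.
Set Strict Implicit.

Theorem proposition4p4 (C : numClosedFieldType) (d : nat) (A : 'M[C]_(d + d)) :
  positive_lagrangian A ->
  let k := \rank (lambda1 A) in
  exists Q : 'M[C]_d,
    (forall x : 'rV[C]_d, is_real_mx x -> 0 <= 'Im (qform Q x)) /\
    (k = d ->
       forall Y : 'rV[C]_(d + d),
         (Y <= A)%MS <-> exists x : 'rV[C]_d, Y = row_mx x (qgrad Q x)) /\
    ((k < d)%N ->
       exists L : 'M[C]_(d, d - k),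
         is_real_mx L /\
         (forall th : 'cV[C]_(d - k), is_real_mx th -> L *m th = 0 -> th = 0) /\
         (forall (x : 'rV[C]_d) (th : 'cV[C]_(d - k)), is_real_mx th ->
            bdot (map_mx (fun z : C => 'Re z) (qgrad Q x)) (L *m th)^T = 0 /\
            bdot (map_mx (fun z : C => 'Im z) (qgrad Q x)) (L *m th)^T = 0) /\
         (forall Y : 'rV[C]_(d + d),
            (Y <= A)%MS <->
            exists (x : 'rV[C]_d) (th : 'cV[C]_(d - k)),
              x *m L = 0 /\ Y = row_mx x (qgrad Q x + (L *m th)^T))).
Proof.
move=> [lagA posA] k; exists (rho_mx A).
split; first exact: Im_qform_rho_ge0.
split; first exact: lagrangian_graphP.
(* The construction below also covers k = d, with N = 0. *)
move=> _.
have [B [Breal Bfree BK]] := real_row_basis (conjv_fibre_sub lagA posA) (rank_fibre A).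
have BtK : (B^T^T == fibre A)%MS by rewrite trmxK.
have Btreal : is_real_mx B^T by move=> i j; rewrite mxE.
exists B^T; split=> //; split.
  move=> th _ Bth0; apply/trmx_inj/(row_free_inj Bfree).
  by rewrite trmx0 mul0mx -[B]trmxK -trmx_mul Bth0 trmx0.
split; last exact: lagrangian_basisP.
by move=> x th; apply: qgrad_rho_re_im_orth Btreal; case/andP: BtK.
Qed.
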